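(* Let $X=\{(u,v,w)\in\mathbb{R}^3:u\le0,\ v\le0,\ w\le 0,\ uv+w-1\le0\}$ with the Euclidean topology $\tau$ and the coordinatewise partial order $\preceq$. Then $(X,\tau,\preceq)$ is a locally compact, order-connected Hausdorff topological $\wedge$-semilattice, and the canonical map $x\mapsto x^\downarrow$ satisfies: (i) it topologically order-embeds $(X,\tau,\preceq)$ in $(C(X),\tau_F,\subseteq)$; (ii) as a map from $(X,\tau)$ to $(C^\downarrow(X),\tau_H)$ it is discontinuous at every point of $X$; (iii) as a map from $(X,\tau)$ to $(C^\downarrow(X),\tau_V)$ it is discontinuous at every point of $X\setminus\{(0,0,0)\}$ and continuous at $(0,0,0)$.
   Context: A partially ordered topological space is a topological space with a partial order whose graph is closed in the product; a topological $\wedge$-semilattice is one in which every pair has an infimum in $X$ and $\wedge:X\times X\to X$ is continuous. $x^\downarrow=\{u\in X:u\preceq x\}$, $x^\uparrow=\{u\in X:x\preceq u\}$ (inside $X$); order-connected means $x^\uparrow\cap y^\downarrow$ is connected whenever $x\preceq y$. $C(X)$ = closed subsets of $X$, $C^\downarrow(X)=\{x^\downarrow:x\in X\}$. Fell topology $\tau_F$: generated by $\{A:A\cap O\neq\emptyset\}$ ($O$ open) and $\{A:A\cap D=\emptyset\}$ ($D$ compact). Vietoris topology $\tau_V$: generated by $\{A:A\cap O\neq\emptyset\}$ ($O$ open) and $\{A:A\cap E=\emptyset\}$ ($E$ closed). $\tau_H$ is the topology induced by the (extended-valued) Hausdorff distance $H(A,B)=\max\{\sup_{a\in A}\inf_{b\in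 B}d(a,b),\ \sup_{b\in B}\inf_{a\in A}d(a,b)\}$, $d$ Euclidean metric. ''Topologically order-embeds'': $x\preceq y\iff x^\downarrow\subseteq y^\downarrow$ and $x\mapsto x^\downarrow$ is a homeomorphism onto $C^\downarrow(X)$ with the relative Fell topology. *)

(* Points of R^3 are nested pairs ((u,v),w) in
   R * R * R with the product (= Euclidean) topology. *)
From HB Require Import structures.
From mathcomp Require Import all_boot all_order all_algebra.
From mathcomp Require Import all_classical all_reals all_analysis.
Set Implicit Arguments. Unset Strict Implicit. Unset Printing Implicit Defensive.
Import Order.TTheory GRing.Theory Num.Theory.
Import numFieldNormedType.Exports.
Local Open Scope classical_set_scope.
Local Open Scope ring_scope.

Notation pt R := (R * R * R)%type (only parsing).

Definition coord_le {R : realType} (p q : pt R) : Prop :=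
  p.1.1 <= q.1.1 /\ p.1.2 <= q.1.2 /\ p.2 <= q.2.

Definition Xex (R : realType) : set (pt R) :=
  [set p | p.1.1 <= 0 /\ p.1.2 <= 0 /\ p.2 <= 0 /\ p.1.1 * p.1.2 + p.2 - 1 <= 0].

Definition euclid_dist {R : realType} (p q : pt R) : R :=
  Num.sqrt ((p.1.1 - q.1.1) ^+ 2 + (p.1.2 - q.1.2) ^+ 2 + (p.2 - q.2) ^+ 2).

Definition open_in {T : topologicalType} (X U : set T) : Prop :=
  exists O, open O /\ U = X `&` O.
Definition closed_in {T : topologicalType} (X A : set T) : Prop :=
  exists C, closed C /\ A = X `&` C.

Definition hausdorff_in {T : topologicalType} (X : set T) : Prop :=
  forall p q, X p -> X q -> p <> q ->
    exists U V, open_in X U /\ open_in X V /\ U p /\ V q /\ U `&` V = set0.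

Definition locally_compact_in {T : topologicalType} (X : set T) : Prop :=
  forall x, X x -> exists K, K `<=` X /\ compact K /\
    exists U, open_in X U /\ U x /\ U `<=` K.

Definition partial_order_on {T : Type} (X : set T) (le : T -> T -> Prop) : Prop :=
  (forall x, X x -> le x x) /\
  (forall x y, X x -> X y -> le x y -> le y x -> x = y) /\
  (forall x y z, X x -> X y -> X z -> le x y -> le y z -> le x z).

Definition downset {T : Type} (X : set T) (le : T -> T -> Prop) (x : T) : set T :=
  [set u | X u /\ le u x].
Definition upset {T : Type} (X : set T) (le : T -> T -> Prop) (x : T) : set T :=
  [set u | X u /\ le x u].

Definition po_top_space {T : topologicalType} (X : set T) (le : T -> T -> Prop) : Prop :=
  partial_order_on X le /\
  closed_in (X `*` X) [set p | X p.1 /\ X p.2 /\ le p.1 p.2].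

Definition order_connected {T : topologicalType} (X : set T) (le : T -> T -> Prop) : Prop :=
  forall x y, X x -> X y -> le x y -> connected (upset X le x `&` downset X le y).

Definition is_inf_in {T : Type} (X : set T) (le : T -> T -> Prop) (x y z : T) : Prop :=
  X z /\ le z x /\ le z y /\ forall w, X w -> le w x -> le w y -> le w z.

Definition top_meet_semilattice {T : topologicalType} (X : set T)
    (le : T -> T -> Prop) : Prop :=
  po_top_space X le /\
  exists m : T -> T -> T,
    (forall x y, X x -> X y -> is_inf_in X le x y (m x y)) /\
    {within X `*` X, continuous (fun p => m p.1 p.2)}.

Definition CX {T : topologicalType} (X : set T) : set (set T) :=
  [set A | A `<=` X /\ closed_in X A].
Definition Cdown {T : Type} (X : set T) (le : T -> T -> Prop) : set (set T) :=
  [set A | exists x, X x /\ A = downset X le x].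

Definition hit {T : topologicalType} (X O : set T) : set (set T) :=
  [set A | CX X A /\ A `&` O !=set0].
Definition miss {T : topologicalType} (X D : set T) : set (set T) :=
  [set A | CX X A /\ A `&` D = set0].

(* open sets of the topology on the universe U0 generated by the subbase S:
   every member of U has a basic neighbourhood (finite intersection of
   subbasic sets, intersected with U0) contained in U *)
Definition generated_open {T : Type} (U0 : set T) (S : set (set T)) (U : set T) : Prop :=
  U `<=` U0 /\
  forall A, U A -> exists (n : nat) (W : nat -> set T),
    (forall i, (i < n)%N -> S (W i) /\ W i A) /\
    (forall B, U0 B -> (forall i, (i < n)%N -> W i B) -> U B).

Definition fell_subbase {T : topologicalType} (X : set T) : set (set (set T)) :=
  [set W | (exists O, open_in X O /\ W = hit X O) \/
           (exists D, D `<=` X /\ compact D /\ W = miss X D)].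
Definition vietoris_subbase {T : topologicalType} (X : set T) : set (set (set T)) :=
  [set W | (exists O, open_in X O /\ W = hit X O) \/
           (exists E, E `<=` X /\ closed_in X E /\ W = miss X E)].

Definition fell_open {T : topologicalType} (X : set T) : set (set T) -> Prop :=
  generated_open (CX X) (fell_subbase X).
Definition vietoris_open {T : topologicalType} (X : set T) : set (set T) -> Prop :=
  generated_open (CX X) (vietoris_subbase X).

Definition relative_open {T : Type} (U1 : set T) (openP : set T -> Prop) (U : set T) : Prop :=
  exists W, openP W /\ U = U1 `&` W.

Definition hausdorff_dist {R : realType} (A B : set (pt R)) : \bar R :=
  Order.max
    (ereal_sup [set ereal_inf [set (euclid_dist a b)%:E | b in B] | a in A])
    (ereal_sup [set ereal_inf [set (euclid_dist a b)%:E | a in A] | b in B]).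

Definition hausdorff_open {R : realType} (U1 : set (set (pt R))) (U : set (set (pt R))) : Prop :=
  U `<=` U1 /\
  forall A, U A -> exists e : R, 0 < e /\
    forall B, U1 B -> (hausdorff_dist A B < e%:E)%E -> U B.

Definition cont_at_into {T : topologicalType} {S : Type} (X : set T)
    (openS : set S -> Prop) (f : T -> S) (x : T) : Prop :=
  forall U, openS U -> U (f x) ->
    exists O, open_in X O /\ O x /\ forall y, O y -> U (f y).

Definition homeomorphism_onto {T : topologicalType} {S : Type} (X : set T)
    (S1 : set S) (openS : set S -> Prop) (f : T -> S) : Prop :=
  (forall x, X x -> S1 (f x)) /\
  (forall s, S1 s -> exists x, X x /\ f x = s) /\
  (forall x y, X x -> X y -> f x = f y -> x = y) /\
  (forall x, X x -> cont_at_into X openS f x) /\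
  (forall U, open_in X U -> openS (f @` U)).

Definition top_order_embeds {T : topologicalType} (X : set T) (le : T -> T -> Prop) : Prop :=
  (forall x, X x -> CX X (downset X le x)) /\
  (forall x y, X x -> X y -> (le x y <-> downset X le x `<=` downset X le y)) /\
  homeomorphism_onto X (Cdown X le) (relative_open (Cdown X le) (fell_open X)) (downset X le).

From HB Require Import structures.
From mathcomp Require Import all_boot all_order all_algebra.
From mathcomp Require Import all_classical all_reals all_analysis.
From mathcomp Require Import ring lra.
Import Order.TTheory GRing.Theory Num.Theory.
Import numFieldNormedType.Exports.
Local Open Scope classical_set_scope.
Local Open Scope ring_scope.

Set Implicit Arguments.
Unset Strict Implicit.
Unset Printing Implicit Defensive.

(* The meet of p and q is the
   coordinatewise minimum with w capped at 1 - uv, a continuous map, and the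
   segment between comparable points stays in X, so the order intervals are
   connected. The lower set y^down meets an open set V as soon as y is close
   to x whenever x^down does, since the meet of a witness p with y tends to p;
   it misses a compact D when x^down does, since the coordinatewise excess over
   x is bounded below on D. Conversely, one hit and one miss condition confine
   y to a small cube around x, so the canonical map is a Fell embedding.
   Since u, v <= 0 and uv + w <= 1, making u (or v) slightly larger allows the
   other of u, v to go to -oo: lower sets of nearby points then differ by
   points arbitrarily far away. This breaks Hausdorff continuity everywhere,
   and Vietoris continuity at every x <> 0, whereas 0^down = X is hit by every
   nearby y^down and misses only the empty set. *)

Section RelativeTopology.
Variables (T : topologicalType) (X : set T).

Lemma open_in_near (O : set T) x :
  open_in X O -> O x -> \forall y \near within X (nbhs x), O y.
Proof.
move=> [W [oW ->]] [_ Wx]; rewrite near_withinE.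
by apply: filterS (open_nbhs_nbhs (conj oW Wx)) => y Wy Xy.
Qed.

Lemma near_open_in (P : set T) x : X x ->
  (\forall y \near within X (nbhs x), P y) -> exists O, open_in X O /\ O x /\ O `<=` P.
Proof.
rewrite near_withinE nbhsE => Xx [B [oB Bx] BP].
exists (X `&` B); split; first by exists B.
by split=> // y [Xy /BP]; apply.
Qed.

Lemma cont_at_intoP (S : Type) (openS : set S -> Prop) (f : T -> S) x : X x ->
  cont_at_into X openS f x <->
  forall U, openS U -> U (f x) -> \forall y \near within X (nbhs x), U (f y).
Proof.
move=> Xx; split => [cf U oU Ufx | nf U oU Ufx].
  have [V [oV [Vx VU]]] := cf U oU Ufx.
  exact: filterS VU (open_in_near oV Vx).
exact: near_open_in Xx (nf U oU Ufx).
Qed.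

Lemma hausdorff_in_space : hausdorff_space T -> hausdorff_in X.
Proof.
rewrite open_hausdorff => hT p q Xp Xq /eqP pq.
have [[A B] /= [/set_mem Ap /set_mem Bq] [oA oB /eqP AB0]] := hT p q pq.
exists (X `&` A), (X `&` B); split; [by exists A|split; [by exists B|]].
split; [by []|split; [by []|]].
by apply/seteqP; split => // r [[_ Ar] [_ Br]]; rewrite -AB0.
Qed.

End RelativeTopology.

Section GeneratedTopology.
Variables (S : Type) (U0 : set S) (Sb : set (set S)).

Lemma generated_open_subbase W : Sb W -> W `<=` U0 -> generated_open U0 Sb W.
Proof.
move=> SbW WU0; split => // A WA.
by exists 1%N, (fun=> W); split => [i _|B _ /(_ 0%N isT)].
Qed.

Lemma relative_open_generated (U1 V : set S) : U1 `<=` U0 -> V `<=` U1 ->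
  (forall A, V A -> exists n (W : nat -> set S),
     (forall i, (i < n)%N -> Sb (W i) /\ W i A) /\
     (forall B, U1 B -> (forall i, (i < n)%N -> W i B) -> V B)) ->
  relative_open U1 (generated_open U0 Sb) V.
Proof.
move=> U10 VU1 nV.
pose basic B (n : nat) (W : nat -> set S) :=
  (forall i, (i < n)%N -> Sb (W i) /\ W i B) /\
  (forall B', U1 B' -> (forall i, (i < n)%N -> W i B') -> V B').
exists [set B | U0 B /\ exists A n W, V A /\ basic A n W /\ forall i, (i < n)%N -> W i B].
split.
  split=> [B []//|B [U0B [A [n [W [VA [[SbW WV] WB]]]]]]].
  exists n, W; split=> [i ni|B' U0B' WB']; first by split; [exact: (SbW i ni).1|exact: WB].
  by split=> //; exists A, n, W.
apply/seteqP; split=> [A VA|B [U1B [_ [A [n [W [_ [[_ WV] WB]]]]]]]]; last exact: WV.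
have [n [W nW]] := nV A VA.
split; first exact: VU1.
split; first exact/U10/VU1.
by exists A, n, W; split=> //; split=> [|i /nW.1 []].
Qed.

Lemma cont_at_into_generated (T : topologicalType) (X : set T) (U1 : set S)
    (f : T -> S) x : X x -> (forall y, X y -> U0 (f y) /\ U1 (f y)) ->
  (forall W, Sb W -> W (f x) -> \forall y \near within X (nbhs x), W (f y)) ->
  cont_at_into X (relative_open U1 (generated_open U0 Sb)) f x.
Proof.
move=> Xx fX nW; apply/cont_at_intoP => // _ [W [[_ gW] ->]] [_ Wfx].
have [n [Ws [SbWs WsW]]] := gW _ Wfx.
have nWs : \forall y \near within X (nbhs x), forall i : 'I_n, Ws i (f y).
  by apply: filter_forall => i; have [] := SbWs i (ltn_ord i); apply: nW.
apply: filterS (filterI (@near_withinT _ (nbhs x) X _) nWs) => y [Xy Wsy].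
split; first exact: (fX y Xy).2.
by apply: WsW => [|i ni]; [exact: (fX y Xy).1|exact: (Wsy (Ordinal ni))].
Qed.

End GeneratedTopology.

Section Continuity.
Variable T : topologicalType.

Lemma continuous_fst_of (U V : topologicalType) (f : T -> U * V) :
  continuous f -> continuous (fun t => (f t).1).
Proof.
by move=> cf t; apply: continuous_comp (cf t) _; case: (f t) => u v; exact: cvg_fst.
Qed.

Lemma continuous_snd_of (U V : topologicalType) (f : T -> U * V) :
  continuous f -> continuous (fun t => (f t).2).
Proof.
by move=> cf t; apply: continuous_comp (cf t) _; case: (f t) => u v; exact: cvg_snd.
Qed.

Lemma continuous_pair (U V : topologicalType) (f : T -> U) (g : T -> V) :
  continuous f -> continuous g -> continuous (fun t => (f t, g t)).
Proof. by move=> cf cg t; apply: cvg_pair; [exact: cf|exact: cg]. Qed.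

Lemma continuous_idfun : continuous (fun t : T => t).
Proof. by move=> t; exact: cvg_id. Qed.

Variable R : realType.
Implicit Types f g : T -> R.

Lemma continuous_add {f g} : continuous f -> continuous g -> continuous (fun t => f t + g t).
Proof. by move=> cf cg t; exact: continuousD (cf t) (cg t). Qed.

Lemma continuous_mul {f g} : continuous f -> continuous g -> continuous (fun t => f t * g t).
Proof. by move=> cf cg t; exact: continuousM (cf t) (cg t). Qed.

Lemma continuous_opp {f} : continuous f -> continuous (fun t => - f t).
Proof. by move=> cf t; exact: continuousN (cf t). Qed.

Lemma continuous_minr {f g} :
  continuous f -> continuous g -> continuous (fun t => Num.min (f t) (g t)).
Proof. by move=> cf cg t; exact: continuous_min (cf t) (cg t). Qed.

Lemma continuous_maxr {f g} :
  continuous f -> continuous g -> continuous (fun t => Num.max (f t) (g t)).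
Proof. by move=> cf cg t; exact: continuous_max (cf t) (cg t). Qed.

Lemma closed_fun_le f g : continuous f -> continuous g -> closed [set t | f t <= g t].
Proof.
move=> cf cg; rewrite (_ : [set t | _] = (fun t => g t - f t) @^-1` [set r | 0 <= r]).
  by move/continuous_closedP: (continuous_add cg (continuous_opp cf)); apply; exact: closed_ge.
by apply/seteqP; split => t /=; rewrite subr_ge0.
Qed.

Lemma open_fun_lt f g : continuous f -> continuous g -> open [set t | f t < g t].
Proof.
move=> cf cg; rewrite (_ : [set t | _] = (fun t => g t - f t) @^-1` [set r | 0 < r]).
  by move/continuousP: (continuous_add cg (continuous_opp cf)); apply; exact: open_gt.
by apply/seteqP; split => t /=; rewrite subr_gt0.
Qed.

End Continuity.

(* Projections may occur eta-reduced, as [fst] or [snd]. *)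
Ltac continuity := solve [repeat match goal with
  | |- forall _, continuous_at _ (fun _ => ?c) => exact: cst_continuous
  | |- forall _, continuous_at _ (fun t => t) => exact: continuous_idfun
  | |- forall _, continuous_at _ fst => case=> ? ?; exact: cvg_fst
  | |- forall _, continuous_at _ snd => case=> ? ?; exact: cvg_snd
  | |- forall _, continuous_at _ (fun t => (@?f t, @?g t)) => apply: continuous_pair
  | |- forall _, continuous_at _ (fun t => (@?f t).1) => apply: continuous_fst_of
  | |- forall _, continuous_at _ (fun t => (@?f t).2) => apply: continuous_snd_of
  | |- forall _, continuous_at _ (fun t => @?f t + @?g t) => apply: continuous_add
  | |- forall _, continuous_at _ (fun t => @?f t * @?g t) => apply: continuous_mul
  | |- forall _, continuous_at _ (fun t => - @?f t) => apply: continuous_opp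
  | |- forall _, continuous_at _ (fun t => Num.min (@?f t) (@?g t)) => apply: continuous_minr
  | |- forall _, continuous_at _ (fun t => Num.max (@?f t) (@?g t)) => apply: continuous_maxr
  | _ => assumption
  end].

Section Coordinates.
Context {R : realType}.
Implicit Types p q r x y z a b : pt R.

Definition coord_lt p q : Prop := p.1.1 < q.1.1 /\ p.1.2 < q.1.2 /\ p.2 < q.2.

Definition pt_shift (d : R) p : pt R := ((p.1.1 + d, p.1.2 + d), p.2 + d).

Lemma coord_le_refl p : coord_le p p.
Proof. by rewrite /coord_le !lexx. Qed.

Lemma coord_le_trans p q r : coord_le p q -> coord_le q r -> coord_le p r.
Proof. by rewrite /coord_le => ? ?; lra. Qed.

Lemma coord_le_anti p q : coord_le p q -> coord_le q p -> p = q.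
Proof.
case: p q => [[a b] c] [[a' b'] c'] [/= ? [? ?]] [/= ? [? ?]].
by congr (_, _, _); apply/eqP; rewrite eq_le; apply/andP.
Qed.

Lemma closed_coord_le (T : topologicalType) (f g : T -> pt R) :
  continuous f -> continuous g -> closed [set t | coord_le (f t) (g t)].
Proof.
move=> cf cg; rewrite (_ : [set t | _] = [set t | (f t).1.1 <= (g t).1.1] `&`
  ([set t | (f t).1.2 <= (g t).1.2] `&` [set t | (f t).2 <= (g t).2])) //.
by apply: closedI; [|apply: closedI]; apply: closed_fun_le; continuity.
Qed.

Lemma open_coord_lt (T : topologicalType) (f g : T -> pt R) :
  continuous f -> continuous g -> open [set t | coord_lt (f t) (g t)].
Proof.
move=> cf cg; rewrite (_ : [set t | _] = [set t | (f t).1.1 < (g t).1.1] `&`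
  ([set t | (f t).1.2 < (g t).1.2] `&` [set t | (f t).2 < (g t).2])) //.
by apply: openI; [|apply: openI]; apply: open_fun_lt; continuity.
Qed.

Lemma ball_coordP x d y :
  ball x d y <-> coord_lt (pt_shift (- d) x) y /\ coord_lt y (pt_shift d x).
Proof.
have ballR (a b : R) : ball a d b <-> a - d < b /\ b < a + d.
  by rewrite -ball_normE /= ltr_distlC; split => [/andP[]|[-> ->]].
rewrite /coord_lt /pt_shift /=.
split => [[[/ballR ? /ballR ?] /ballR ?]|[[? [? ?]] [? [? ?]]]]; first lra.
by split; [split|]; apply/ballR; lra.
Qed.

Lemma compact_coord_box (K : set (pt R)) a b : closed K ->
  K `<=` [set q | coord_le a q /\ coord_le q b] -> compact K.
Proof.
move=> cK Kab; apply: (subclosed_compact cK (compact_setX (compact_setX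
  (@segment_compact R a.1.1 b.1.1) (@segment_compact R a.1.2 b.1.2))
  (@segment_compact R a.2 b.2))).
move=> q /Kab [[? [? ?]] [? [? ?]]].
by split; [split|]; rewrite /= in_itv /=; apply/andP.
Qed.

Lemma coord_ltW p q : coord_lt p q -> coord_le p q.
Proof. by case=> ? [? ?]; rewrite /coord_le; do ?split; exact: ltW. Qed.

Lemma coord_le_lt_trans p q r : coord_le p q -> coord_lt q r -> coord_lt p r.
Proof. by rewrite /coord_le /coord_lt => ? ?; lra. Qed.

Lemma coord_lt_le_trans p q r : coord_lt p q -> coord_le q r -> coord_lt p r.
Proof. by rewrite /coord_le /coord_lt => ? ?; lra. Qed.

Definition coord_excess x q : R :=
  Num.max (q.1.1 - x.1.1) (Num.max (q.1.2 - x.1.2) (q.2 - x.2)).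

Lemma continuous_coord_excess x : continuous (coord_excess x).
Proof. by rewrite /coord_excess; continuity. Qed.

Lemma coord_excess_le0 x q : coord_excess x q <= 0 <-> coord_le q x.
Proof.
rewrite /coord_excess /coord_le !ge_max !subr_le0.
by split => [/andP[-> /andP[-> ->]]|[-> [-> ->]]].
Qed.

Lemma coord_excess_lt x q d : coord_lt q (pt_shift d x) -> coord_excess x q < d.
Proof.
rewrite /coord_lt /coord_excess /= !gt_max => -[? [? ?]].
by apply/andP; split; [|apply/andP; split]; lra.
Qed.

Definition pt_swap p : pt R := ((p.1.2, p.1.1), p.2).

Lemma pt_swapK : involutive pt_swap.
Proof. by case=> [[? ?] ?]. Qed.

Lemma coord_le_swap p q : coord_le (pt_swap p) (pt_swap q) <-> coord_le p q.
Proof. by rewrite /coord_le /=; split=> -[? [? ?]]. Qed.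

Lemma ball_swap p d q : ball (pt_swap p) d (pt_swap q) <-> ball p d q.
Proof. by rewrite !ball_coordP /coord_lt /pt_shift /=; tauto. Qed.

Lemma euclid_dist_swap a b : euclid_dist (pt_swap a) (pt_swap b) = euclid_dist a b.
Proof. by rewrite /euclid_dist /= (addrC ((a.1.2 - b.1.2) ^+ 2)). Qed.

Lemma coord_excess_swap x q : coord_excess (pt_swap x) (pt_swap q) = coord_excess x q.
Proof. by rewrite /coord_excess /= maxCA. Qed.

Definition pt_lerp z y (t : R) : pt R :=
  ((z.1.1 + t * (y.1.1 - z.1.1), z.1.2 + t * (y.1.2 - z.1.2)), z.2 + t * (y.2 - z.2)).

Lemma lerpr_between (a b t : R) : a <= b -> 0 <= t <= 1 -> a <= a + t * (b - a) <= b.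
Proof. by move=> ab /andP[t0 t1]; apply/andP; split; nra. Qed.

Lemma lerp_le z y t : coord_le z y -> 0 <= t <= 1 ->
  coord_le z (pt_lerp z y t) /\ coord_le (pt_lerp z y t) y.
Proof.
move=> [? [? ?]] t01; rewrite /coord_le /pt_lerp /=.
have [/andP[? ?] /andP[? ?] /andP[? ?]] :
  [/\ z.1.1 <= z.1.1 + t * (y.1.1 - z.1.1) <= y.1.1,
      z.1.2 <= z.1.2 + t * (y.1.2 - z.1.2) <= y.1.2
    & z.2 <= z.2 + t * (y.2 - z.2) <= y.2] by split; exact: lerpr_between.
by do ?split.
Qed.

Lemma coord_le_euclid_dist a b :
  [/\ `|a.1.1 - b.1.1| <= euclid_dist a b, `|a.1.2 - b.1.2| <= euclid_dist a b
    & `|a.2 - b.2| <= euclid_dist a b].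
Proof.
have sqrt_le (c s : R) : 0 <= s -> `|c| <= Num.sqrt (c ^+ 2 + s).
  by move=> s0; rewrite -sqrtr_sqr; apply: ler_wsqrtr; rewrite lerDl.
rewrite /euclid_dist; split.
- by rewrite -addrA; apply: sqrt_le; rewrite addr_ge0 // sqr_ge0.
- rewrite (addrC ((a.1.1 - b.1.1) ^+ 2)) -addrA.
  by apply: sqrt_le; rewrite addr_ge0 // sqr_ge0.
- by rewrite [X in Num.sqrt X]addrC; apply: sqrt_le; rewrite addr_ge0 // sqr_ge0.
Qed.

Lemma euclid_distC a b : euclid_dist a b = euclid_dist b a.
Proof.
by rewrite /euclid_dist -(opprB a.1.1) -(opprB a.1.2) -(opprB a.2) !sqrrN.
Qed.

Lemma hausdorff_dist_gel (A B : set (pt R)) a (r : R) : A a ->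
  (forall b, B b -> r <= euclid_dist a b) -> (r%:E <= hausdorff_dist A B)%E.
Proof.
move=> Aa rB; rewrite /hausdorff_dist le_max; apply/orP; left.
apply: le_trans (ereal_sup_ubound _); last by exists a.
by apply: le_ereal_inf_tmp => _ [b Bb <-]; rewrite lee_fin; exact: rB.
Qed.

Lemma hausdorff_dist_ger (A B : set (pt R)) b (r : R) : B b ->
  (forall a, A a -> r <= euclid_dist a b) -> (r%:E <= hausdorff_dist A B)%E.
Proof.
move=> Bb rA; rewrite /hausdorff_dist le_max; apply/orP; right.
apply: le_trans (ereal_sup_ubound _); last by exists b.
by apply: le_ereal_inf_tmp => _ [a Aa <-]; rewrite lee_fin; exact: rA.
Qed.

End Coordinates.

Section TheSpaceX.
Context {R : realType}.
Implicit Types p q x y z a b : pt R.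
Local Notation X := (@Xex R).
Local Notation le := (@coord_le R).
Local Notation dn := (downset (@Xex R) (@coord_le R)).
Local Notation o := ((0, 0, 0) : pt R).

Lemma Xex_le0 p : X p -> le p o.
Proof. by case=> ? [? [? _]]. Qed.

Lemma closed_Xex : closed X.
Proof.
rewrite (_ : X = [set p | le p o] `&` [set p | p.1.1 * p.1.2 + p.2 - 1 <= 0]).
  by apply: closedI; [apply: closed_coord_le|apply: closed_fun_le]; continuity.
by apply/seteqP; split => p; rewrite /Xex /coord_le /=; tauto.
Qed.

Lemma closed_downset x : closed (dn x).
Proof.
rewrite (_ : dn x = X `&` [set q | le q x]) //.
by apply: closedI; [exact: closed_Xex|apply: closed_coord_le; continuity].
Qed.

Lemma CX_downset x : CX X (dn x).
Proof.
split; first by move=> p [].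
exists (dn x); split; first exact: closed_downset.
by apply/seteqP; split => [p dp|p [] //]; split => //; case: dp.
Qed.

Lemma downset_refl x : X x -> dn x x.
Proof. by move=> Xx; split => //; exact: coord_le_refl. Qed.

Lemma le_downsetP x y : X x -> X y -> le x y <-> dn x `<=` dn y.
Proof.
move=> Xx Xy; split=> [lexy q [Xq leqx]|/(_ x (downset_refl Xx)) [] //].
by split=> //; exact: coord_le_trans lexy.
Qed.

Lemma downset_inj x y : X x -> X y -> dn x = dn y -> x = y.
Proof.
move=> Xx Xy dnxy; apply: coord_le_anti.
- by apply/(le_downsetP Xx Xy); rewrite dnxy.
- by apply/(le_downsetP Xy Xx); rewrite dnxy.
Qed.

(* The third coordinate is capped by 1 - uv because the coordinatewise
   minimum of two points of X need not lie in X. *)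
Definition pt_meet p q : pt R :=
  ((Num.min p.1.1 q.1.1, Num.min p.1.2 q.1.2),
   Num.min (Num.min p.2 q.2) (1 - Num.min p.1.1 q.1.1 * Num.min p.1.2 q.1.2)).

Lemma continuous_pt_meet : continuous (fun pq : pt R * pt R => pt_meet pq.1 pq.2).
Proof. by rewrite /pt_meet; continuity. Qed.

Lemma pt_meet_inf p q : X p -> X q -> is_inf_in X le p q (pt_meet p q).
Proof.
move=> [? [? [? ?]]] [? [? [? ?]]]; rewrite /is_inf_in /pt_meet /Xex /coord_le /=.
set u := Num.min p.1.1 q.1.1; set v := Num.min p.1.2 q.1.2.
set w := Num.min (Num.min p.2 q.2) (1 - u * v).
have [u1 u2] : u <= p.1.1 /\ u <= q.1.1 by rewrite !ge_min !lexx ?orbT.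
have [v1 v2] : v <= p.1.2 /\ v <= q.1.2 by rewrite !ge_min !lexx ?orbT.
have [w1 [w2 w3]] : [/\ w <= p.2, w <= q.2 & w <= 1 - u * v].
  by rewrite !ge_min !lexx ?orbT.
do 3 (split; first by do ?split; lra).
move=> r [? [? [? ?]]] [? [? ?]] [? [? ?]].
have ru : r.1.1 <= u by rewrite le_min; apply/andP.
have rv : r.1.2 <= v by rewrite le_min; apply/andP.
have : u * v <= r.1.1 * r.1.2 by nra.
by move=> ?; do ?split => //; rewrite !le_min; do ?(apply/andP; split); lra.
Qed.

Lemma pt_meet_l p x : X p -> le p x -> pt_meet p x = p.
Proof.
case: p => [[a b] c] [/= ? [? [? ?]]] [/= ? [? ?]].
rewrite /pt_meet /= !min_l //; lra.
Qed.

Lemma top_meet_semilattice_Xex : top_meet_semilattice X le.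
Proof.
split; last first.
  exists pt_meet; split; first exact: pt_meet_inf.
  exact: continuous_subspaceT continuous_pt_meet.
split.
  split; first by move=> x _; exact: coord_le_refl.
  by split=> [x y _ _|x y z _ _ _]; [exact: coord_le_anti|exact: coord_le_trans].
exists [set pq : pt R * pt R | le pq.1 pq.2]; split.
  by apply: closed_coord_le; continuity.
apply/seteqP; split=> [[p q] [Xp [Xq pq]]|[p q] [[Xp Xq] pq]].
  by split; first split.
by split; last split.
Qed.

(* uv + w - 1 along the segment is the convex combination of its endpoint
   values minus t(1-t)(du)(dv), and du, dv >= 0 for comparable endpoints. *)
Lemma lerp_Xex y z t : X y -> X z -> le z y -> 0 <= t <= 1 -> X (pt_lerp z y t).
Proof.
move=> Xy [_ [_ [_ Cz]]] zy t01; have [_ [_ [_ Cy]]] := Xy.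
have [? [? ?]] := coord_le_trans (lerp_le zy t01).2 (Xex_le0 Xy).
case: zy t01 => [du [dv _]] /andP[t0 t1].
rewrite /Xex /pt_lerp /=; do 3 (split; first by []).
rewrite (_ : _ * _ + _ - 1 = (1 - t) * (z.1.1 * z.1.2 + z.2 - 1) +
  t * (y.1.1 * y.1.2 + y.2 - 1) - t * (1 - t) * ((y.1.1 - z.1.1) * (y.1.2 - z.1.2)));
  last by ring.
rewrite lerBlDr add0r; apply: le_trans (_ : 0 <= _); last first.
  by apply: mulr_ge0; [apply: mulr_ge0|apply: mulr_ge0]; rewrite ?subr_ge0.
by rewrite -(addr0 0) lerD // ?mulr_ge0_le0 // subr_ge0.
Qed.

Lemma lerp_between x y z t : X y -> X z -> le x z -> le z y -> 0 <= t <= 1 ->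
  [/\ X (pt_lerp z y t), le x (pt_lerp z y t) & le (pt_lerp z y t) y].
Proof.
move=> Xy Xz xz zy t01; have [zl ly] := lerp_le zy t01.
by split; [exact: lerp_Xex|exact: coord_le_trans zl|].
Qed.

Lemma order_connected_Xex : order_connected X le.
Proof.
move=> x y _ Xy _; set S := _ `&` _.
have lerp1 z : pt_lerp z y 1 = y.
  by case: y {Xy S} => [[? ?] ?]; rewrite /pt_lerp /= !mul1r !subrKC.
have lerp0 z : pt_lerp z y 0 = z by case: z => [[? ?] ?]; rewrite /pt_lerp /= !mul0r !addr0.
have -> : S = \bigcup_(z in S) (pt_lerp z y @` `[0, 1]).
  apply/seteqP; split=> [z Sz|w [z [[Xz xz] [_ zy]] [t /= t01 <-]]].
    by exists z => //; exists 0; rewrite ?lerp0 //= in_itv /= lexx ler01.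
  move: t01; rewrite in_itv /= => t01.
  by have [? ? ?] := lerp_between Xy Xz xz zy t01; split; split.
apply: bigcup_connected => [|z _].
  by exists y => z _; exists 1; rewrite ?lerp1 //= in_itv /= lexx ler01.
apply: connected_continuous_connected; first exact: segment_connected.
by apply: continuous_subspaceT; rewrite /pt_lerp; continuity.
Qed.

Lemma locally_compact_Xex : locally_compact_in X.
Proof.
move=> x Xx.
exists (X `&` [set q | le (pt_shift (-1) x) q /\ le q (pt_shift 1 x)]).
split; first by move=> q [].
split.
  apply: (@compact_coord_box _ _ (pt_shift (-1) x) (pt_shift 1 x)); last by move=> q [].
  apply: closedI; first exact: closed_Xex.
  apply: closedI; apply: closed_coord_le; continuity.
exists (X `&` ball x 1); split; first by exists (ball x 1); split; first exact: ball_open.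
split; first by split => //; exact: ballxx.
by move=> q [Xq /ball_coordP [lo hi]]; split=> //; split; exact: coord_ltW.
Qed.

Lemma downset_hit_near (V : set (pt R)) x : open_in X V -> dn x `&` V !=set0 ->
  \forall y \near within X (nbhs x), dn y `&` V !=set0.
Proof.
move=> [W [oW ->]] [p [[Xp px] [_ Wp]]].
have cm : continuous (fun y => pt_meet p y) by rewrite /pt_meet; continuity.
have : nbhs x ((fun y => pt_meet p y) @^-1` W).
  by apply: (cm x); rewrite pt_meet_l //; exact: open_nbhs_nbhs.
rewrite near_withinE; apply: filterS => y Wy Xy.
have [Xm [_ [my _]]] := pt_meet_inf Xp Xy.
by exists (pt_meet p y).
Qed.

Lemma downset_miss_near (D : set (pt R)) x : compact D -> D `<=` X -> dn x `&` D = set0 ->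
  \forall y \near within X (nbhs x), dn y `&` D = set0.
Proof.
move=> cD DX dnD; have [D0|D0] := pselect (D !=set0); last first.
  by apply: nearW => y; apply/seteqP; split => // q [_ Dq]; apply: D0; exists q.
have cex : {within D, continuous (coord_excess x)}.
  by apply: continuous_subspaceT; exact: continuous_coord_excess.
have [c /set_mem Dc cmin] := compact_EVT_min D0 cD cex.
have m0 : 0 < coord_excess x c.
  rewrite ltNge; apply/negP => /coord_excess_le0 cx.
  suff : (dn x `&` D) c by rewrite dnD.
  by split=> //; split=> //; exact: DX.
rewrite near_withinE; apply/nbhs_ballP; exists (coord_excess x c) => // y.
move=> /ball_coordP [_ yx] Xy; apply/seteqP; split => // q [[_ qy] Dq].
have := coord_excess_lt (coord_le_lt_trans qy yx).
by rewrite ltNge cmin //; exact: mem_set.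
Qed.

Lemma fell_continuous_downset x : X x ->
  cont_at_into X (relative_open (Cdown X le) (fell_open X)) dn x.
Proof.
move=> Xx; apply: cont_at_into_generated => // [y Xy|W].
  by split; [exact: CX_downset|exists y].
case=> [[V [oV ->]]|[D [DX [cD ->]]]] [_ dnW].
  by move: (downset_hit_near oV dnW); apply: filterS => y; split => //; exact: CX_downset.
by move: (downset_miss_near cD DX dnW); apply: filterS => y; split => //; exact: CX_downset.
Qed.

(* Members y^down of hit(fell_hit_set x d) and miss(fell_miss_set x d) are
   exactly those with y in the open cube of radius d around x. *)
Definition fell_hit_set x d := X `&` [set q | coord_lt (pt_shift (- d) x) q].
Definition fell_miss_set x d :=
  X `&` [set q | le (pt_shift (- d) x) q /\ ~ coord_lt q (pt_shift d x)].

Lemma open_in_fell_hit_set x d : open_in X (fell_hit_set x d).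
Proof. by eexists; split; last reflexivity; apply: open_coord_lt; continuity. Qed.

Lemma compact_fell_miss_set x d : compact (fell_miss_set x d).
Proof.
apply: (@compact_coord_box _ _ (pt_shift (- d) x) o); last first.
  by move=> q [/Xex_le0 ? [? _]].
apply: closedI; first exact: closed_Xex.
apply: closedI; first by apply: closed_coord_le; continuity.
by apply: open_closedC; apply: open_coord_lt; continuity.
Qed.

Lemma ball_of_fell_hit_miss x d y : X y -> dn y `&` fell_hit_set x d !=set0 ->
  dn y `&` fell_miss_set x d = set0 -> ball x d y.
Proof.
move=> Xy [q [[_ qy] [_ xq]]] miss.
have lo := coord_lt_le_trans xq qy.
apply/ball_coordP; split => //; apply: contrapT => hi.
suff : (dn y `&` fell_miss_set x d) y by rewrite miss.
by split; [exact: downset_refl|split => //; split => //; exact: coord_ltW].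
Qed.

Lemma fell_open_image_downset U : open_in X U ->
  relative_open (Cdown X le) (fell_open X) (dn @` U).
Proof.
move=> oU; have UX : U `<=` X by case: oU => V [_ ->] q [].
apply: relative_open_generated => [_ [x [_ ->]]|_ [x Ux <-]|_ [x Ux <-]].
- exact: CX_downset.
- by exists x; split => //; exact: UX.
have Xx := UX x Ux.
move: (open_in_near oU Ux); rewrite near_withinE => /nbhs_ballP [d /= d0 xdU].
exists 2%N, (fun i => if i == 0%N then hit X (fell_hit_set x d)
                    else miss X (fell_miss_set x d)).
split=> [[|[|i]] //= _|_ [y [Xy ->]] W].
- split; first by left; exists (fell_hit_set x d); split => //; exact: open_in_fell_hit_set.
  split; first exact: CX_downset.
  by exists x; split; [exact: downset_refl|split => //; rewrite /coord_lt /pt_shift /=; lra].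
- split.
    right; exists (fell_miss_set x d); split; first by move=> q [].
    by split => //; exact: compact_fell_miss_set.
  split; first exact: CX_downset.
  apply/seteqP; split => // q [[_ qx] [_ [_ nq]]]; apply: nq.
  by apply: coord_le_lt_trans qx _; rewrite /coord_lt /pt_shift /=; lra.
have [_ hit] := W 0%N isT; have [_ miss] := W 1%N isT.
by exists y => //; apply: (xdU y) => //; exact: ball_of_fell_hit_miss.
Qed.

Lemma top_order_embeds_Xex : top_order_embeds X le.
Proof.
split; first by move=> x _; exact: CX_downset.
split; first exact: le_downsetP.
split; first by move=> x Xx; exists x.
split; first by move=> _ [x [Xx ->]]; exists x.
split; first exact: downset_inj.
split; first exact: fell_continuous_downset.
exact: fell_open_image_downset.
Qed.

Lemma Xex_swap p : X (pt_swap p) <-> X p.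
Proof. by rewrite /Xex /= mulrC; split=> -[? [? [? ?]]]. Qed.

Lemma downset_swap y a : dn (pt_swap y) (pt_swap a) <-> dn y a.
Proof. by split=> -[/Xex_swap ? /coord_le_swap ?]; split=> //; apply/Xex_swap. Qed.

(* The witness is a = (y.u, t, y.w - y.u t) with t very negative: a point b
   of z^down within distance 1 of a has b.v < t + 1 and b.u <= z.u < y.u, so
   uv + w <= 1 forces b.w more than 1 below a.w. *)
Lemma far_downset_u y z : X y -> X z -> z.1.1 < y.1.1 ->
  exists2 a, dn y a & forall b, dn z b -> 1 <= euclid_dist a b.
Proof.
move=> [yu [yv [yw Cy]]] [zu [zv [zw Cz]]] zy.
set D := y.1.1 - z.1.1; set K := (3 - z.1.1 - y.2) / D.
have D0 : 0 < D by rewrite subr_gt0.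
have DK : K * D = 3 - z.1.1 - y.2 by rewrite divfK // lt0r_neq0.
have K0 : 0 <= K by rewrite divr_ge0 //; [lra|exact: ltW].
set t := y.1.2 - 1 - K.
have [t1 tv] : t <= -1 /\ t <= y.1.2 by rewrite /t; split; lra.
have yt : 0 <= y.1.1 * t by apply: mulr_le0; lra.
have tD : 3 - z.1.1 - y.2 <= (y.1.1 - z.1.1) * (- t).
  have Dv : 0 <= (1 - y.1.2) * D by apply: mulr_ge0; lra.
  have -> : (y.1.1 - z.1.1) * - t = (1 - y.1.2) * D + K * D by rewrite /t /D; ring.
  by rewrite DK; lra.
exists ((y.1.1, t), y.2 - y.1.1 * t).
  split; last by rewrite /coord_le /=; do ?split; lra.
  by rewrite /Xex /= addrCA subrr addr0; do ?split; lra.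
move=> b [[bu [bv [bw Cb]]] [lu [lv lw]]].
rewrite leNgt; apply/negP => ab1.
have [_ /le_lt_trans /(_ ab1) dv /le_lt_trans /(_ ab1) dw] := coord_le_euclid_dist
  ((y.1.1, t), y.2 - y.1.1 * t) b.
move: dv dw; rewrite !ltr_norml /= => /andP[? ?] /andP[? ?].
have : 0 <= (z.1.1 - b.1.1) * (- b.1.2) by apply: mulr_ge0; lra.
have : 0 <= (- z.1.1) * (t + 1 - b.1.2) by apply: mulr_ge0; lra.
nra.
Qed.

Lemma far_downset y z : X y -> X z -> z.1.1 < y.1.1 \/ z.1.2 < y.1.2 ->
  exists2 a, dn y a & forall b, dn z b -> 1 <= euclid_dist a b.
Proof.
move=> Xy Xz [zy|zy]; first exact: far_downset_u.
have [a ya far] := far_downset_u (proj2 (Xex_swap y) Xy) (proj2 (Xex_swap z) Xz) zy.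
exists (pt_swap a); first by rewrite -[y]pt_swapK; apply/downset_swap.
by move=> b zb; rewrite -euclid_dist_swap pt_swapK; apply: far; apply/downset_swap.
Qed.

Lemma hausdorff_dist_downset_ge1 y z : X y -> X z -> y.1 <> z.1 ->
  (1%:E <= hausdorff_dist (dn z) (dn y))%E.
Proof.
move=> Xy Xz yz.
have [zy|yz'] : (z.1.1 < y.1.1 \/ z.1.2 < y.1.2) \/ (y.1.1 < z.1.1 \/ y.1.2 < z.1.2).
  have [?|?|eu] := ltgtP y.1.1 z.1.1; [by right; left|by left; left|].
  have [?|?|ev] := ltgtP y.1.2 z.1.2; [by right; right|by left; right|].
  by case: yz; rewrite [y.1]surjective_pairing eu ev -surjective_pairing.
- have [a ya far] := far_downset Xy Xz zy.
  by apply: hausdorff_dist_ger ya _ => b zb; rewrite euclid_distC; exact: far.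
- have [a za far] := far_downset Xz Xy yz'.
  exact: hausdorff_dist_gel za far.
Qed.

(* Moving along the curve u v + w = const changes u while staying in X. *)
Lemma near_point_other_u x d : X x -> 0 < d ->
  exists2 y, X y /\ ball x d y & y.1.1 <> x.1.1.
Proof.
move=> [xu [xv [xw Cx]]] d0.
have v1 : 0 < 1 - x.1.2 by lra.
set e := d / 2 / (1 - x.1.2).
have e0 : 0 < e by rewrite !divr_gt0.
have ev : e - e * x.1.2 = d / 2.
  by rewrite -[RHS](divfK (lt0r_neq0 v1)) -/e; ring.
have ev0 : e * x.1.2 <= 0 by rewrite mulr_ge0_le0 // ltW.
exists ((x.1.1 - e, x.1.2), x.2 + e * x.1.2); last by rewrite /=; lra.
split; last by apply/ball_coordP; rewrite /coord_lt /pt_shift /=; lra.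
rewrite /Xex /= (_ : _ * _ + _ - 1 = x.1.1 * x.1.2 + x.2 - 1); last by ring.
by do ?split; lra.
Qed.

Lemma hausdorff_discontinuous_downset x : X x ->
  ~ cont_at_into X (hausdorff_open (Cdown X le)) dn x.
Proof.
move=> Xx /(cont_at_intoP _ _ Xx) cont.
pose U := [set B | exists2 z, X z & B = dn z /\ z.1 = x.1].
have oU : hausdorff_open (Cdown X le) U.
  split=> [_ [z Xz [-> _]]|_ [z Xz [-> zx]]]; first by exists z.
  exists 1; split=> // _ [y [Xy ->]] Hzy; exists y => //; split=> //; rewrite -zx.
  apply: contrapT => yz; have := hausdorff_dist_downset_ge1 Xy Xz yz.
  by rewrite leNgt Hzy.
have Ux : U (dn x) by exists x.
move: (cont U oU Ux); rewrite near_withinE => /nbhs_ballP [d /= d0 xdU].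
have [y [Xy bxy] yx] := near_point_other_u Xx d0.
have [z Xz [dnyz zx]] := xdU y bxy Xy.
by apply: yx; rewrite (downset_inj Xy Xz dnyz) zx.
Qed.

Lemma Xex_origin : X o.
Proof. by rewrite /Xex /=; lra. Qed.

(* Every point of X lies below o, so o^down = X misses only the empty set. *)
Lemma vietoris_continuous_downset_origin :
  cont_at_into X (relative_open (Cdown X le) (vietoris_open X)) dn o.
Proof.
apply: cont_at_into_generated => [|y Xy|W]; first exact: Xex_origin.
  by split; [exact: CX_downset|exists y].
case=> [[V [oV ->]]|[E [EX [_ ->]]]] [_ dnW].
  by move: (downset_hit_near oV dnW); apply: filterS => y; split => //; exact: CX_downset.
apply: nearW => y; split; first exact: CX_downset.
apply/seteqP; split => // q [[Xq _] Eq].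
suff : (dn o `&` E) q by rewrite dnW.
by split => //; split => //; exact: Xex_le0.
Qed.

(* For x <> o, the lower sets of points slightly above x contain points with
   positive excess over x and very negative u or v. They all lie in this closed
   set, which x^down misses. *)
Definition vietoris_jump_set x :=
  X `&` [set z | 1 <= coord_excess x z * (1 - z.1.1 - z.1.2)].

Lemma closed_in_vietoris_jump_set x : closed_in X (vietoris_jump_set x).
Proof.
eexists; split; last reflexivity.
by apply: closed_fun_le; rewrite /coord_excess; continuity.
Qed.

Lemma downset_vietoris_jump_set x : dn x `&` vietoris_jump_set x = set0.
Proof.
apply/seteqP; split => // z [[[zu [zv _]] /coord_excess_le0 zx] [_ /= jz]].
have : coord_excess x z * (1 - z.1.1 - z.1.2) <= 0 by apply: mulr_le0_ge0 => //; lra.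
by rewrite leNgt (lt_le_trans ltr01 jz).
Qed.

Lemma vietoris_jump_set_swap x z :
  vietoris_jump_set (pt_swap x) (pt_swap z) <-> vietoris_jump_set x z.
Proof.
rewrite /vietoris_jump_set /= coord_excess_swap (addrAC 1).
by split=> -[/Xex_swap ? ?]; split => //; apply/Xex_swap.
Qed.

Lemma jump_lower_bound x z e : 0 < e -> e <= coord_excess x z ->
  e^-1 <= 1 - z.1.1 - z.1.2 -> 1 <= coord_excess x z * (1 - z.1.1 - z.1.2).
Proof.
move=> e0 ex ez; have ei0 : 0 <= e^-1 by rewrite invr_ge0 ltW.
apply: le_trans (ler_pM (ltW e0) ei0 ex ez).
by rewrite mulfV // lt0r_neq0.
Qed.

Lemma vietoris_jump_near_u x d : X x -> x.1.1 < 0 -> 0 < d ->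
  exists y, [/\ X y, ball x d y & dn y `&` vietoris_jump_set x !=set0].
Proof.
move=> [_ [xv [xw Cx]]] xu d0.
set e := Num.min (d / 2) (- x.1.1).
have [ed eu] : e <= d / 2 /\ e <= - x.1.1 by rewrite !ge_min !lexx ?orbT.
have e0 : 0 < e by rewrite lt_min divr_gt0 //= oppr_gt0.
have ei0 : 0 < e^-1 by rewrite invr_gt0.
have ev : e * x.1.2 <= 0 by rewrite mulr_ge0_le0 // ltW.
have uv : 0 <= (x.1.1 + e) * (x.1.2 - e^-1) by apply: mulr_le0; lra.
exists ((x.1.1 + e, x.1.2), x.2); split.
- by rewrite /Xex /= mulrDl; do ?split; lra.
- by apply/ball_coordP; rewrite /coord_lt /pt_shift /=; lra.
exists ((x.1.1 + e, x.1.2 - e^-1), x.2 - (x.1.1 + e) * (x.1.2 - e^-1)).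
have Xz : X ((x.1.1 + e, x.1.2 - e^-1), x.2 - (x.1.1 + e) * (x.1.2 - e^-1)).
  by rewrite /Xex /= addrCA subrr addr0; do ?split; lra.
split; first by split => //; rewrite /coord_le /=; do ?split; lra.
split => //; apply: (@jump_lower_bound _ _ e) => //; last by rewrite /=; lra.
by rewrite /coord_excess le_max /= addrAC subrr add0r lexx.
Qed.

Lemma vietoris_jump_near_w x d : x.1.1 = 0 -> x.1.2 = 0 -> x.2 < 0 -> 0 < d ->
  exists y, [/\ X y, ball x d y & dn y `&` vietoris_jump_set x !=set0].
Proof.
move=> xu xv xw d0.
set e := Num.min (d / 2) (- x.2).
have [ed ew] : e <= d / 2 /\ e <= - x.2 by rewrite !ge_min !lexx ?orbT.
have e0 : 0 < e by rewrite lt_min divr_gt0 //= oppr_gt0.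
have ei0 : 0 < e^-1 by rewrite invr_gt0.
exists ((0, 0), x.2 + e); split.
- by rewrite /Xex /= mul0r; do ?split; lra.
- by apply/ball_coordP; rewrite /coord_lt /pt_shift /= xu xv; lra.
exists ((- e^-1, 0), x.2 + e).
have Xz : X ((- e^-1, 0), x.2 + e) by rewrite /Xex /= mulr0; do ?split; lra.
split; first by split => //; rewrite /coord_le /=; do ?split; lra.
split => //; apply: (@jump_lower_bound _ _ e) => //; last by rewrite /=; lra.
by rewrite /coord_excess /= (addrAC x.2) subrr !add0r !le_max lexx !orbT.
Qed.

Lemma vietoris_jump_near x d : X x -> x <> o -> 0 < d ->
  exists y, [/\ X y, ball x d y & dn y `&` vietoris_jump_set x !=set0].
Proof.
move=> Xx xo d0; have [xu [xv [xw _]]] := Xx.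
have [u0|u0|u0] := ltgtP x.1.1 0; [exact: vietoris_jump_near_u|by move: u0; rewrite ltNge xu|].
have [v0|v0|v0] := ltgtP x.1.2 0; [|by move: v0; rewrite ltNge xv|].
  have Xsx : X (pt_swap x) by apply/Xex_swap.
  have [y [Xy bxy [z [[Xz zy] jz]]]] := vietoris_jump_near_u Xsx v0 d0.
  exists (pt_swap y); split; first exact/Xex_swap.
    by rewrite -[x]pt_swapK; apply/ball_swap.
  exists (pt_swap z); split; first by apply/downset_swap; split.
  by rewrite -[x]pt_swapK; apply/vietoris_jump_set_swap.
have [w0|w0|w0] := ltgtP x.2 0; [exact: vietoris_jump_near_w|by move: w0; rewrite ltNge xw|].
by case: xo; move: u0 v0 w0; case: x {Xx xu xv xw} => [[? ?] ?] /= -> -> ->.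
Qed.

Lemma vietoris_discontinuous_downset x : X x -> x <> o ->
  ~ cont_at_into X (relative_open (Cdown X le) (vietoris_open X)) dn x.
Proof.
move=> Xx xo /(cont_at_intoP _ _ Xx) cont.
pose U := Cdown X le `&` miss X (vietoris_jump_set x).
have oU : relative_open (Cdown X le) (vietoris_open X) U.
  exists (miss X (vietoris_jump_set x)); split => //.
  apply: generated_open_subbase; last by move=> A [].
  right; exists (vietoris_jump_set x); split; first by move=> q [].
  by split => //; exact: closed_in_vietoris_jump_set.
have Ux : U (dn x).
  by split; [exists x|split; [exact: CX_downset|exact: downset_vietoris_jump_set]].
move: (cont U oU Ux); rewrite near_withinE => /nbhs_ballP [d /= d0 xdU].
have [y [Xy bxy yE]] := vietoris_jump_near Xx xo d0.
have [_ [_ dnyE]] := xdU y bxy Xy.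
by move: yE; rewrite dnyE => -[].
Qed.

End TheSpaceX.

Theorem mainTheorem11 (R : realType) :
  let X := @Xex R in
  let le := @coord_le R in
  let o : pt R := (0, 0, 0) in
  (locally_compact_in X /\ order_connected X le /\ hausdorff_in X /\
   top_meet_semilattice X le) /\
  top_order_embeds X le /\
  (forall x, X x ->
     ~ cont_at_into X (hausdorff_open (Cdown X le)) (downset X le) x) /\
  ((forall x, X x -> x <> o ->
     ~ cont_at_into X (relative_open (Cdown X le) (vietoris_open X)) (downset X le) x) /\
   cont_at_into X (relative_open (Cdown X le) (vietoris_open X)) (downset X le) o).
Proof.
move=> X le o.
split; first split.
- exact: locally_compact_Xex.
- split; first exact: order_connected_Xex.
  split; first exact/hausdorff_in_space/norm_hausdorff.
  exact: top_meet_semilattice_Xex.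
split; first exact: top_order_embeds_Xex.
split; first exact: hausdorff_discontinuous_downset.
split; [exact: vietoris_discontinuous_downset|exact: vietoris_continuous_downset_origin].
Qed.
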